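(* Let $\mathbf{k}$ be a commutative unital ring, $R$ a $\mathbf{k}$-algebra, $\lambda\in\mathbf{k}$, and $P$ a Rota-Baxter operator of weight $\lambda$ on $R$. Let $\tilde P:=-\lambda\,\mathrm{id}_R-P$. (1) For all $a,b\in\mathbf{k}$, the operator $Q:=aP+b\tilde P$ is an extended Rota-Baxter operator of weight $(\lambda(a+b),ab\lambda^2)$. (2) Let $\mu,\kappa\in\mathbf{k}$ and let $a,b\in\mathbf{k}$ be the roots of $t^2-\mu t+\kappa$ (so $t^2-\mu t+\kappa=(t-a)(t-b)$). Then $Q:=aP+b\tilde P$ is an extended Rota-Baxter operator of weight $(\mu\lambda,\kappa\lambda^2)$. In particular, if $P$ is a Rota-Baxter operator of weight $1$, then $Q$ is an extended Rota-Baxter operator of weight $(\mu,\kappa)$.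
   Context: A Rota-Baxter operator of weight $\lambda$ on a $\mathbf{k}$-algebra $R$ is a $\mathbf{k}$-linear map $P:R\to R$ with $P(x)P(y)=P(xP(y))+P(P(x)y)+\lambda P(xy)$ for all $x,y\in R$. For $\lambda,\kappa\in\mathbf{k}$, an extended Rota-Baxter operator of weight $(\lambda,\kappa)$ on $R$ is a $\mathbf{k}$-linear map $P:R\to R$ such that $P(x)P(y)=P(xP(y))+P(P(x)y)+\lambda P(xy)+\kappa xy$ for all $x,y\in R$. *)

From HB Require Import structures.
From mathcomp Require Import all_boot all_order all_algebra.
Set Implicit Arguments. Unset Strict Implicit. Unset Printing Implicit Defensive.
Import GRing.Theory.
Local Open Scope ring_scope.

Definition is_RB (k : comPzRingType) (R : algType k) (lam : k) (P : R -> R) : Prop :=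
  forall x y : R, P x * P y = P (x * P y) + P (P x * y) + lam *: P (x * y).

Definition is_ERB (k : comPzRingType) (R : algType k) (lam kap : k) (P : R -> R) : Prop :=
  forall x y : R,
    P x * P y = P (x * P y) + P (P x * y) + lam *: P (x * y) + kap *: (x * y).

Definition RBtilde (k : comPzRingType) (R : algType k) (lam : k) (P : R -> R) : R -> R :=
  fun x => - (lam *: x) - P x.

Definition RBcomb (k : comPzRingType) (R : algType k) (lam a b : k) (P : R -> R) : R -> R :=
  fun x => a *: P x + b *: RBtilde lam P x.

From HB Require Import structures.
From mathcomp Require Import all_boot all_order all_algebra.
From mathcomp Require Import ring.
Import GRing.Theory.
Local Open Scope ring_scope.

(* Q = a P + b (-lam id - P) = (a - b) P - b lam id is an affine combination
   c P + d id. Expanding the extended Rota-Baxter identity for c P + d id, the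
   terms in [x * P y] and [P x * y] cancel, and the Rota-Baxter identity for P
   leaves only multiples of [P (x * y)] and [x * y]; their coefficients agree
   for the weights (c lam - 2 d, d^2 - c d lam), which for c = a - b and
   d = - b lam are (lam (a + b), a b lam^2). Part (2) is part (1) via Vieta. *)

Section AffineRotaBaxter.

Variables (k : comPzRingType) (R : algType k) (lam : k) (P : {linear R -> R}).
Hypothesis HP : is_RB lam P.

Lemma is_ERB_scale_add_id (c d : k) (Q : R -> R) :
    (forall x, Q x = c *: P x + d *: x) ->
  is_ERB (c * lam - d *+ 2) (d ^+ 2 - c * d * lam) Q.
Proof.
move=> QE x y; rewrite !QE.
rewrite !(mulrDl, mulrDr, =^~scalerAl, =^~scalerAr, linearD, linearZ) /=.
rewrite HP !(scalerDr, scalerA) (mulrC d c).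
have coefC : c * c * lam = c * d + c * d + c * (c * lam - d *+ 2) by ring.
have coefF : d * d =
  d * d + d * d + d * (c * lam - d *+ 2) + (d ^+ 2 - c * d * lam) by ring.
rewrite coefC {1}coefF !scalerDl !addrA.
by rewrite [LHS](ACl (1*3*7*8*2*4*6*9*5*10*11*12)).
Qed.

Lemma RBcombE (a b : k) (x : R) :
  RBcomb lam a b P x = (a - b) *: P x + (- (b * lam)) *: x.
Proof.
rewrite /RBcomb /RBtilde scalerBr scalerN scalerA scalerBl scaleNr.
by rewrite addrA addrAC.
Qed.

Lemma is_ERB_RBcomb (a b : k) :
  is_ERB (lam * (a + b)) (a * b * lam ^+ 2) (RBcomb lam a b P).
Proof.
have [-> ->] : lam * (a + b) = (a - b) * lam - (- (b * lam)) *+ 2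
    /\ a * b * lam ^+ 2 = (- (b * lam)) ^+ 2 - (a - b) * (- (b * lam)) * lam.
  by split; ring.
exact: is_ERB_scale_add_id (RBcombE a b).
Qed.

End AffineRotaBaxter.

Lemma vieta_quadratic (k : comPzRingType) (mu kap a b : k) :
    (forall t, t ^+ 2 - mu * t + kap = (t - a) * (t - b)) ->
  mu = a + b /\ kap = a * b.
Proof.
move=> factorE.
have kapE : kap = a * b.
  transitivity (0 ^+ 2 - mu * 0 + kap); first by ring.
  by rewrite factorE; ring.
split=> //.
transitivity (1 + kap - (1 ^+ 2 - mu * 1 + kap)); first by ring.
by rewrite factorE kapE; ring.
Qed.

Theorem corollary2p6 (k : comPzRingType) (R : algType k) (lam : k)
    (P : {linear R -> R}) (HP : is_RB lam P) :
  (forall a b : k,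
     is_ERB (lam * (a + b)) (a * b * lam ^+ 2) (RBcomb lam a b P))
  /\
  (forall mu kap a b : k,
     (forall t : k, t ^+ 2 - mu * t + kap = (t - a) * (t - b)) ->
     is_ERB (mu * lam) (kap * lam ^+ 2) (RBcomb lam a b P)
     /\ (lam = 1 -> is_ERB mu kap (RBcomb lam a b P))).
Proof.
split=> [|mu kap a b /vieta_quadratic [-> ->]]; first exact: is_ERB_RBcomb.
split; first by rewrite mulrC; exact: is_ERB_RBcomb.
move=> lam1; have := @is_ERB_RBcomb _ _ _ _ HP a b.
by rewrite lam1 expr1n mulr1 mul1r.
Qed.
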